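(* Let $P$ be a knot projection on $S^2$ (possibly reducible), and let $P_B$ be the knot projection obtained from $P$ by applying the move $B$ at every crossing of $P$. Then $P_B$ is reduced.
   Context: A knot projection is a closed curve in $S^2$ that is the image of an immersion $S^1\to S^2$ whose only singularities are finitely many transverse double points (crossings), up to isotopy of $S^2$. A crossing $c$ is reducible if the four corners of $S^2\setminus P$ at $c$ do not lie in four pairwise distinct regions; $P$ is reduced if it has no reducible crossing. Move $B$ at a crossing $c$: choose an orientation of $P$; in a small disk around $c$, $P$ is drawn as two arcs, both traversed from left to right, crossing once (shadow of the braid generator $\sigma_1$ with the braid running horizontally); $B$ replaces this by two arcs with the same endpoints, both traversed left to right, crossing three times in succession (shadow of $\sigma_1^3$, forming two consecutive bigons), unchanged outside the disk. This is independent of the chosen orientation. *)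

(* Knot projections on S^2 are encoded combinatorially as
   oriented combinatorial maps (rotation systems) of 4-regular plane graphs. *)
From mathcomp Require Import all_boot.
#[global] Set Warnings "-notation-overridden".
Set Implicit Arguments. Unset Strict Implicit. Unset Printing Implicit Defensive.

Section KnotProjection.
Variable D : finType.        (* darts = half-edges; 4 per crossing *)
Variables (sigma alpha : D -> D).
(* sigma : counterclockwise rotation of the darts around their crossing
           (orientation of S^2);
   alpha : the involution pairing the two darts of an edge. *)

(* straight-ahead step: follow the edge, then continue through the crossing
   to the opposite dart (sigma^2). *)
Definition straight (x : D) : D := sigma (sigma (alpha x)).

(* face permutation; the corner between x and sigma x at a crossing lies in
   the region (face) given by the phi-orbit of sigma x. *)
Definition facep (x : D) : D := sigma (alpha x).

(* A knot projection with #|D|/4 crossings: a connected 4-regular map of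
   genus 0 (Euler: V - E + F = 2, i.e. F = #|D|/4 + 2) whose straight-ahead
   walks form a single closed curve.  The empty map (#|D| = 0) stands for the
   crossingless simple closed curve. *)
Definition is_knot_projection : Prop :=
  [/\ injective sigma,
      forall x, sigma (sigma (sigma (sigma x))) = x,
      forall x, sigma (sigma x) != x &
      forall x, alpha (alpha x) = x /\ alpha x != x] /\
  [/\ forall x y, connect (fun a b => (b == sigma a) || (b == alpha a)) x y,
      (0 < #|D| -> fcard facep predT = #|D| %/ 4 + 2) &
      forall x y, fconnect straight x y || fconnect straight x (alpha y)].

(* region containing the k-th corner (between sigma^k d and sigma^(k+1) d)
   at the crossing of d is the facep-orbit of sigma^(k+1) d. *)
Definition corner_rep (d : D) (k : nat) : D := iter k.+1 sigma d.

(* the crossing of d is reducible iff two of its four corners lie in the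
   same region *)
Definition reducible_at (d : D) : bool :=
  [exists i : 'I_4, exists j : 'I_4,
     (i != j) && fconnect facep (corner_rep d i) (corner_rep d j)].

Definition reduced : Prop := forall d : D, ~~ reducible_at d.

(* An orientation of the curve is given by a dart d0: the darts in the
   straight-orbit of d0 are the "outgoing" darts.  At each crossing the two
   incoming darts (NW, SW = sigma NW) are on the left, the outgoing ones
   (NE, SE) on the right, both strands running left to right.  The roles:
     out x, out (sigma x) = false,false : NW   | false,true : SW
                          = true,false  : NE   | true,true  : SE
   Each crossing (darts NE,NW,SW,SE) is replaced by three crossings
   c1 c2 c3 in a row (shadow of sigma_1^3):
     c1 = (NW1, NW0, SW0, SW1), c2 = (NE2, NW2, SW2, SE2),
     c3 = (NE0, NE1, SE1, SE0)          (counterclockwise)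
   with edges (x,0)-(alpha x,0) (old edges) and (x,1)-(x,2) (new edges). *)
Variable d0 : D.
Definition outgoing (x : D) : bool := fconnect straight d0 x.

Definition B_sigma (p : D * 'I_3) : D * 'I_3 :=
  let: (x, k) := p in
  match val k with
  | 0 => if outgoing x == outgoing (sigma x) then (sigma x, ord0)
         else (x, inord 1)
  | 1 => if outgoing x == outgoing (sigma x) then (x, ord0)
         else (sigma (sigma (sigma x)), inord 1)
  | _ => (sigma x, inord 2)
  end.

Definition B_alpha (p : D * 'I_3) : D * 'I_3 :=
  let: (x, k) := p in
  match val k with
  | 0 => (alpha x, ord0)
  | 1 => (x, inord 2)
  | _ => (x, inord 1)
  end.

End KnotProjection.

(* Move B turns each crossing c of P into three crossings in a row bounding two
   bigons.  The corners of the new crossings are these bigons and the old regions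
   at c: the middle crossing sees both bigons and the regions above and below c,
   an outer crossing sees one bigon, the region beside c and again those above
   and below.  Bigons are told apart by the crossing they come from, old regions
   by an Alexander numbering h of the regions of P (h changes by +-1 across each
   edge of the curve, according to the side): around c it takes the values
   a, a + 1, a + 2, a + 1, so the regions above and below c differ and both differ
   from the ones beside c.  Labelling the darts of P_B accordingly gives a function
   constant on faces and injective on the corners of every crossing.

   An Alexander numbering exists because H^1(S^2) = 0: the +-1 edge cochain sums
   to zero around every crossing, hence is the coboundary of a function on
   regions.  This is proved over Q with the standard inner product on functions
   on darts, the dimension count being Euler's formula F = V + 2. *)

From HB Require Import structures.
From mathcomp Require Import all_boot all_algebra ring lra zify.
Import GRing.Theory Num.Theory.
Local Open Scope ring_scope.
Set Implicit Arguments. Unset Strict Implicit. Unset Printing Implicit Defensive.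

Section InnerProduct.
Variable T : finType.
Local Notation U := {ffun T -> rat^o}.

Definition dotf (u v : U) : rat := \sum_x u x * v x.

Lemma dotfC u v : dotf u v = dotf v u.
Proof. by apply: eq_bigr => x _; rewrite mulrC. Qed.

Lemma dotf0 u : dotf u 0 = 0.
Proof. by rewrite /dotf big1 // => x _; rewrite ffunE mulr0. Qed.

Lemma dotfD u v w : dotf u (v + w) = dotf u v + dotf u w.
Proof. by rewrite /dotf -big_split; apply: eq_bigr => x _; rewrite ffunE mulrDr. Qed.

Lemma dotf_eq0 u : dotf u u = 0 -> u = 0.
Proof.
move=> /eqP; rewrite psumr_eq0 => [/allP uu0|x _]; last by rewrite -expr2 sqr_ge0.
apply/ffunP=> x; rewrite ffunE; have := uu0 x; rewrite mem_index_enum => /(_ isT).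
by rewrite mulf_eq0 orbb => /eqP.
Qed.

Lemma dim_ffun : \dim (fullv : {vspace U}) = #|T|.
Proof. by rewrite dimvf /dim /= muln1. Qed.

Definition adjoint (f g : 'End(U)) : Prop := forall u w, dotf (f u) w = dotf u (g w).

Lemma adjoint_sym f g : adjoint f g -> adjoint g f.
Proof. by move=> fg_adj u w; rewrite dotfC -fg_adj dotfC. Qed.

Lemma limg_cap_lker_adj f g : adjoint f g -> (limg f :&: lker g = 0)%VS.
Proof.
move=> fg_adj; apply/eqP; rewrite -subv0; apply/subvP => y.
rewrite memv_cap memv_ker => /andP[/memv_imgP[z _ ->] /eqP gfz0]; rewrite memv0.
by apply/eqP/dotf_eq0; rewrite fg_adj gfz0 dotf0.
Qed.

Lemma dim_limg_adj f g : adjoint f g -> (\dim (limg f) <= \dim (limg g))%N.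
Proof.
move=> fg_adj; apply: leq_trans (dimvS (limgS g (subvf (limg f)))).
by rewrite (limg_dim_eq (limg_cap_lker_adj fg_adj)).
Qed.

Section Adjoint.
Variables f g : 'End(U).
Hypothesis fg_adj : adjoint f g.

Lemma limg_add_lker_adj : (limg f + lker g)%VS = fullv.
Proof.
have dim_gf := dim_limg_adj (adjoint_sym fg_adj).
apply/eqP; rewrite eqEdim subvf /= dim_ffun.
have := dimv_sum_cap (limg f) (lker g); rewrite (limg_cap_lker_adj fg_adj) dimv0.
have := limg_ker_dim g fullv; rewrite capfv dim_ffun; lia.
Qed.

Lemma mem_limg_adj v : (forall j, j \in lker g -> dotf v j = 0) -> v \in limg f.
Proof.
move=> v_orth; have : v \in (limg f + lker g)%VS by rewrite limg_add_lker_adj memvf.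
case/memv_addP => _ /memv_imgP[z _ ->] [j j_ker v_eq].
have gj0 : g j = 0 by apply/eqP; rewrite -memv_ker.
suff j0 : j = 0 by rewrite v_eq j0 addr0 memv_img ?memvf.
apply: dotf_eq0; have := v_orth j j_ker.
by rewrite v_eq dotfC dotfD [dotf j _]dotfC fg_adj gj0 dotf0 add0r.
Qed.
End Adjoint.

Definition delta (p : T -> T) (u : U) : U := [ffun x => u (p x) - u x].

Fact delta_is_semilinear p : semilinear (delta p).
Proof. by split=> [a u|u v]; apply/ffunP=> x; rewrite !ffunE; ring. Qed.

HB.instance Definition _ p :=
  GRing.isSemilinear.Build rat U U _ (delta p) (delta_is_semilinear p).

Lemma lker_delta p u : (u \in lker (linfun (delta p))) = [forall x, u (p x) == u x].
Proof.
rewrite memv_ker lfunE; apply/eqP/forallP => [u_inv x|u_inv].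
  by have := congr1 (fun v : U => v x) u_inv; rewrite !ffunE => /eqP; rewrite subr_eq0.
by apply/ffunP=> x; rewrite !ffunE (eqP (u_inv x)) subrr.
Qed.

Lemma dim_lker_delta p : injective p -> \dim (lker (linfun (delta p))) = fcard p predT.
Proof.
move=> p_inj; have sym_p := fconnect_sym p_inj.
pose R := {x : T | froots p x}.
pose rt x : R := exist _ (froot p x) (roots_root sym_p x).
have rt_p x : rt (p x) = rt x.
  by apply: val_inj; apply/esym/(fingraph.rootP sym_p)/fconnect1.
pose ext (c : {ffun R -> rat^o}) : U := [ffun x => c (rt x)].
have ext_lin : semilinear ext by split=> [a c|c c']; apply/ffunP=> x; rewrite !ffunE.
pose extL : {linear {ffun R -> rat^o} -> U} :=
  HB.pack ext (GRing.isSemilinear.Build _ _ _ _ ext ext_lin).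
have -> : lker (linfun (delta p)) = limg (linfun extL).
  apply/vspaceP => u; rewrite lker_delta.
  apply/forallP/memv_imgP => [u_inv|[c _ ->] x]; last by rewrite !lfunE /= !ffunE rt_p.
  exists [ffun r : R => u (val r)]; first exact: memvf.
  apply/ffunP => x; rewrite lfunE /= !ffunE /=.
  have inv_u : invariant p u =1 xpredT by move=> y; exact: u_inv.
  exact: (fconnect_invariant inv_u (connect_root _ x)).
rewrite limg_dim_eq; last first.
  apply/eqP; rewrite -subv0; apply/subvP => c; rewrite memv_cap memv_ker lfunE memv0.
  case/andP=> _ /eqP ext_c0; apply/eqP/ffunP => r.
  have := congr1 (fun u : U => u (val r)) ext_c0; rewrite !ffunE.
  suff -> : rt (val r) = r by [].
  by apply: val_inj => /=; apply/eqP; case: r.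
rewrite dimvf /dim /= muln1 card_sig; apply: eq_card => x.
by rewrite !inE andbT.
Qed.

Lemma dim_connect_invariant (e : rel T) (W : {vspace U}) :
    (forall x y, connect e x y) ->
    (forall u, u \in W -> forall x y, e x y -> u y = u x) ->
  (\dim W <= 1)%N.
Proof.
move=> e_conn W_inv; case: (pickP T) => [x0 _|T0]; last first.
  by rewrite (leq_trans (dimvS (subvf W))) // dim_ffun (eq_card0 T0).
pose one : U := [ffun _ => 1].
apply: (@leq_trans (\dim <[one]>)); last by rewrite dim_vline leq_b1.
apply/dimvS/subvP => u u_W; apply/vlineP; exists (u x0).
apply/ffunP => x; rewrite !ffunE /GRing.scale /= mulr1.
have u_closed : closed e [pred z | u z == u x0].
  by move=> y z /(W_inv u u_W) uz; rewrite !inE uz.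
by have := closed_connect u_closed (e_conn x0 x); rewrite !inE eqxx => /esym/eqP.
Qed.
End InnerProduct.

Section Rotation.
Variables (D : finType) (sigma : D -> D).
Hypotheses (sigma_inj : injective sigma)
  (sigma4 : forall x, sigma (sigma (sigma (sigma x))) = x)
  (sigma2_neq : forall x, sigma (sigma x) != x).

Lemma sigma_neq x : sigma x != x.
Proof. by apply: contra (sigma2_neq x) => /eqP sx; rewrite !sx. Qed.

Lemma sigma3_neq x : sigma (sigma (sigma x)) != x.
Proof. by apply: contra (sigma_neq x) => /eqP s3x; rewrite -{1}s3x sigma4. Qed.

Lemma card_vertices : (fcard sigma predT * 4)%N = #|D|.
Proof.
apply: (fcard_order_set sigma_inj) => [|//]; apply/subsetP => x _; rewrite inE.
apply/eqP; apply: (@order_cycle _ _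
  [:: x; sigma x; sigma (sigma x); sigma (sigma (sigma x))]).
- by rewrite /= !eqxx sigma4 eqxx.
- rewrite /= !inE !negb_or !(inj_eq sigma_inj) ![x == _]eq_sym.
  by rewrite !sigma_neq !sigma2_neq sigma3_neq.
- exact: mem_head.
Qed.
End Rotation.

Section Involution.
Variables (D : finType) (alpha : D -> D).
Hypotheses (alphaK : involutive alpha) (alpha_neq : forall x, alpha x != x).

Lemma card_edges : (fcard alpha predT * 2)%N = #|D|.
Proof.
apply: (fcard_order_set (inv_inj alphaK)) => [|//]; apply/subsetP => x _; rewrite inE.
apply/eqP; apply: (@order_cycle _ _ [:: x; alpha x]).
- by rewrite /= !eqxx alphaK eqxx.
- by rewrite /= inE andbT eq_sym alpha_neq.
- exact: mem_head.
Qed.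
End Involution.

Section FacePotential.
Variables (D : finType) (sigma alpha : D -> D).
Hypotheses (sigma_inj : injective sigma)
  (sigma4 : forall x, sigma (sigma (sigma (sigma x))) = x)
  (sigma2_neq : forall x, sigma (sigma x) != x)
  (alphaK : involutive alpha) (alpha_neq : forall x, alpha x != x)
  (map_connected : forall x y,
     connect (fun a b => (b == sigma a) || (b == alpha a)) x y)
  (euler : fcard (facep sigma alpha) predT = (#|D| %/ 4 + 2)%N).
Variable eps : D -> rat.
Hypotheses (eps_alpha : forall x, eps (alpha x) = - eps x)
  (eps_vertex : forall x, eps x + eps (sigma x) + eps (sigma (sigma x))
                          + eps (sigma (sigma (sigma x))) = 0).

Local Notation U := {ffun D -> rat^o}.
Local Notation phi := (facep sigma alpha).

Lemma facep_inj : injective phi.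
Proof. by move=> x y /sigma_inj/(inv_inj alphaK). Qed.

Lemma froot_facep x : froot phi (phi x) = froot phi x.
Proof. by apply/esym/(fingraph.rootP (fconnect_sym facep_inj))/fconnect1. Qed.

Definition face_pull (u : U) : U := [ffun x => u (froot phi x)].
Definition face_sum (w : U) : U := [ffun r => \sum_(y | froot phi y == r) w y].

Fact face_pull_is_semilinear : semilinear face_pull.
Proof. by split=> [a u|u v]; apply/ffunP=> x; rewrite !ffunE. Qed.
HB.instance Definition _ :=
  GRing.isSemilinear.Build rat U U _ face_pull face_pull_is_semilinear.

Fact face_sum_is_semilinear : semilinear face_sum.
Proof.
split=> [a u|u v]; apply/ffunP=> r; rewrite !ffunE ?scaler_sumr -?big_split;
  by apply: eq_bigr => y _; rewrite ffunE.
Qed.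
HB.instance Definition _ :=
  GRing.isSemilinear.Build rat U U _ face_sum face_sum_is_semilinear.

Local Notation dA := (linfun (delta alpha)).
Local Notation pull := (linfun face_pull).
Local Notation push := (linfun face_sum).

Lemma adjoint_dA : adjoint dA dA.
Proof.
move=> u w; rewrite /dotf; under eq_bigr => x _ do rewrite lfunE ffunE mulrBl.
under [RHS]eq_bigr => x _ do rewrite lfunE ffunE mulrBr.
rewrite !sumrB; congr (_ - _); rewrite (reindex_inj (inv_inj alphaK)) /=.
by apply: eq_bigr => x _; rewrite alphaK.
Qed.

Lemma adjoint_face : adjoint pull push.
Proof.
move=> c w; apply/esym; rewrite /dotf.
under eq_bigr => r _ do rewrite lfunE ffunE big_distrr.
rewrite (exchange_big_dep xpredT) //=; apply: eq_bigr => y _.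
by rewrite lfunE ffunE (eq_bigl (pred1 (froot phi y))) ?big_pred1_eq.
Qed.

Local Notation dface := (dA \o pull)%VF.
Local Notation dface_adj := (push \o dA)%VF.
Local Notation coboundaries := (dA @: lker (linfun (delta sigma)))%VS.

Lemma adjoint_dface : adjoint dface dface_adj.
Proof. by move=> u w; rewrite !comp_lfunE adjoint_dA adjoint_face. Qed.

Lemma face_pull_facep c x : pull c (phi x) = pull c x.
Proof. by rewrite lfunE !ffunE froot_facep. Qed.

Lemma dim_img_dA (W : {vspace U}) :
    (forall u, u \in W -> u \in lker dA -> forall x, u (sigma x) = u x) ->
  (\dim W <= \dim (dA @: W) + 1)%N.
Proof.
move=> W_sigma; rewrite -(limg_ker_dim dA W) addnC leq_add2l.
apply: (dim_connect_invariant map_connected) => u.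
rewrite memv_cap => /andP[uW uS] x y /orP[]/eqP->; first exact: W_sigma.
by move: uS; rewrite lker_delta => /forallP/(_ x)/eqP.
Qed.

Lemma dim_limg_dface : (fcard phi predT <= \dim (limg dface) + 1)%N.
Proof.
have face_inv : (lker (linfun (delta phi)) <= limg pull)%VS.
  apply/subvP => u; rewrite lker_delta => /forallP u_inv; apply/memv_imgP.
  exists u; first exact: memvf.
  apply/ffunP => x; rewrite lfunE ffunE.
  have inv_u : invariant phi u =1 xpredT by move=> y; exact: u_inv.
  exact: (fconnect_invariant inv_u (connect_root _ x)).
rewrite -(dim_lker_delta facep_inj) limg_comp.
apply: leq_trans (dimvS face_inv) (dim_img_dA _) => _ /memv_imgP[c _ ->] uS x.
move: uS; rewrite lker_delta => /forallP/(_ x)/eqP <-.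
by rewrite -{1}[x]alphaK -[sigma _]/(phi (alpha x)) face_pull_facep.
Qed.

Lemma dim_coboundaries : (fcard sigma predT <= \dim coboundaries + 1)%N.
Proof.
rewrite -(dim_lker_delta sigma_inj); apply: dim_img_dA => u.
by rewrite lker_delta => /forallP u_inv _ x; apply/eqP.
Qed.

Lemma coboundaries_sub_lker : (coboundaries <= lker dface_adj)%VS.
Proof.
apply/subvP => _ /memv_imgP[u + ->]; rewrite lker_delta => /forallP u_inv.
have u_alpha y : u (alpha y) = u (phi y) by rewrite /facep (eqP (u_inv _)).
rewrite memv_ker comp_lfunE; apply/eqP/ffunP => r; rewrite lfunE !ffunE.
under eq_bigr => y _ do rewrite !lfunE !ffunE alphaK u_alpha.
have sum_phi : \sum_(y | froot phi y == r) u (phi y) = \sum_(y | froot phi y == r) u y.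
  by rewrite [RHS](reindex_inj facep_inj); apply: eq_bigl => y; rewrite froot_facep.
by rewrite !sumrB sum_phi !subrr ?subr0.
Qed.

(* The inclusion is an equality by dimension count: here Euler's formula is used,
   with V vertices, 2V edges and V + 2 faces. *)
Lemma lker_dface_adj : lker dface_adj = (lker dA + coboundaries)%VS.
Proof.
have sub_lker : (lker dA + coboundaries <= lker dface_adj)%VS.
  rewrite subv_add coboundaries_sub_lker andbT; apply/subvP => u.
  by rewrite !memv_ker comp_lfunE => /eqP ->; rewrite linear0.
have sym_cap_cob : (lker dA :&: coboundaries = 0)%VS.
  apply/eqP; rewrite -subv0 -(limg_cap_lker_adj adjoint_dA) capvC.
  by rewrite capvS ?limgS ?subvf.
have nV := card_vertices sigma_inj sigma4 sigma2_neq.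
have n_vertices : (#|D| %/ 4)%N = fcard sigma predT by rewrite -nV mulnK.
have := dim_limg_adj adjoint_dface; have := dim_limg_dface.
have := dim_coboundaries; have := dimv_sum_cap (lker dA) coboundaries.
have := limg_ker_dim dface_adj fullv; have := card_edges alphaK alpha_neq.
rewrite sym_cap_cob dimv0 capfv dim_ffun (dim_lker_delta (inv_inj alphaK)).
rewrite euler n_vertices.
by move=> *; apply/eqP; rewrite eq_sym eqEdim sub_lker /=; lia.
Qed.

Local Notation epsf := ([ffun x => eps x] : U).

Lemma dotf_eps_lker_dA u : u \in lker dA -> dotf epsf u = 0.
Proof.
rewrite lker_delta => /forallP u_sym.
suff : dotf epsf u = - dotf epsf u by lra.
rewrite /dotf -sumrN (reindex_inj (inv_inj alphaK)) /=; apply: eq_bigr => x _.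
by rewrite !ffunE eps_alpha (eqP (u_sym x)) mulNr.
Qed.

Lemma sum_eps_vertex_inv (u : U) : (forall x, u (sigma x) = u x) ->
  \sum_x eps x * u x = 0.
Proof.
move=> u_inv; set S := \sum_x _.
have shift (f : D -> rat) : \sum_x f x * u x = \sum_x f (sigma x) * u x.
  by rewrite (reindex_inj sigma_inj) /=; apply: eq_bigr => x _; rewrite u_inv.
have : S + \sum_x eps (sigma x) * u x + \sum_x eps (sigma (sigma x)) * u x
         + \sum_x eps (sigma (sigma (sigma x))) * u x = 0.
  by rewrite -!big_split big1 // => x _ /=; rewrite -!mulrDl eps_vertex mul0r.
rewrite -(shift (fun y => eps (sigma (sigma y)))) -(shift (fun y => eps (sigma y))).
by rewrite -(shift eps) -/S; lra.
Qed.

Lemma dotf_eps_coboundaries c : c \in coboundaries -> dotf epsf c = 0.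
Proof.
case/memv_imgP => u; rewrite lker_delta => /forallP u_inv ->.
rewrite -adjoint_dA /dotf.
transitivity (- (\sum_x eps x * u x + \sum_x eps x * u x)).
  rewrite -big_split -sumrN; apply: eq_bigr => x _.
  by rewrite lfunE !ffunE eps_alpha -opprD mulNr mulrDl.
by rewrite sum_eps_vertex_inv ?addr0 ?oppr0 // => x; apply/eqP.
Qed.

Lemma exists_face_potential : exists h : D -> rat,
  (forall x, h (phi x) = h x) /\ (forall x, h (alpha x) = h x + eps x).
Proof.
have : epsf \in limg dface.
  apply: (mem_limg_adj adjoint_dface) => j; rewrite lker_dface_adj.
  case/memv_addP => s s_sym [c c_cob ->].
  by rewrite dotfD dotf_eps_lker_dA // dotf_eps_coboundaries // addr0.
case/memv_imgP => z _ eps_dz; exists (pull z); split=> x; first exact: face_pull_facep.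
have := congr1 (fun u : U => u x) eps_dz; rewrite comp_lfunE lfunE !ffunE => ->.
by rewrite addrC subrK.
Qed.
End FacePotential.

Arguments B_sigma : simpl never.

Lemma inj_iter (A : Type) (f : A -> A) n : injective f -> injective (iter n f).
Proof. by move=> f_inj; elim: n => // n IHn x y; rewrite !iterS => /f_inj/IHn. Qed.

Lemma inord1 : val (inord 1 : 'I_3) = 1%N. Proof. exact: inordK. Qed.
Lemma inord2 : val (inord 2 : 'I_3) = 2%N. Proof. exact: inordK. Qed.

Lemma ord3P (k : 'I_3) : [\/ k = ord0, k = inord 1 | k = inord 2].
Proof.
by case: k => [[|[|[|//]]] k_lt]; [apply: Or31 | apply: Or32 | apply: Or33];
  apply: val_inj; rewrite /= ?inord1 ?inord2.
Qed.

Section Orientation.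
Variables (D : finType) (sigma alpha : D -> D) (d0 : D).
Hypotheses (sigma_inj : injective sigma)
  (sigma4 : forall x, sigma (sigma (sigma (sigma x))) = x)
  (sigma2_neq : forall x, sigma (sigma x) != x)
  (alphaK : involutive alpha) (alpha_neq : forall x, alpha x != x)
  (one_component : forall x y, fconnect (straight sigma alpha) x y
                               || fconnect (straight sigma alpha) x (alpha y)).

Local Notation T := (straight sigma alpha).
Local Notation out := (outgoing sigma alpha d0).

Lemma straight_inj : injective T.
Proof. by move=> x y /sigma_inj/sigma_inj/(inv_inj alphaK). Qed.

Lemma iter_straight_alpha m y : iter m T (alpha (iter m T y)) = alpha y.
Proof.
elim: m y => // m IHm y.
by rewrite iterSr iterS {2}/straight alphaK sigma4 IHm.
Qed.

(* If k straight steps led from x to alpha x, the walk from x and the reversed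
   walk from alpha x would meet halfway, at z with alpha z = z (k even) or
   T z = alpha z (k odd). *)
Lemma outgoing_alpha x : out (alpha x) = ~~ out x.
Proof.
have := one_component d0 x; rewrite /outgoing.
case d0x : (fconnect T d0 x); case d0ax : (fconnect T d0 (alpha x)) => //= _.
have /iter_findex : fconnect T x (alpha x).
  by apply: connect_trans d0ax; rewrite (fconnect_sym straight_inj).
set k := findex _ _ _; have k_split : k = (k./2 + (odd k + k./2))%N.
  by rewrite addnCA addnn odd_double_half.
rewrite k_split iterD -(iter_straight_alpha k./2 x) => /(inj_iter straight_inj).
set z := iter k./2 T x; case: (odd k); rewrite ?add1n ?add0n -/z => alpha_z.
  by move: (sigma2_neq (alpha z)); rewrite -[X in _ != X]alpha_z eqxx.
by move: (alpha_neq z); rewrite -alpha_z eqxx.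
Qed.

Lemma outgoing_straight x : out (T x) = out x.
Proof. by rewrite /outgoing -same_fconnect1_r //; apply: straight_inj. Qed.

Lemma outgoing_sigma2 x : out (sigma (sigma x)) = ~~ out x.
Proof.
by rewrite -{1}[x]alphaK -[sigma _]/(T (alpha x)) outgoing_straight outgoing_alpha.
Qed.

Definition crossing_sign x : rat := if out x then 1 else -1.

Lemma crossing_sign_alpha x : crossing_sign (alpha x) = - crossing_sign x.
Proof. by rewrite /crossing_sign outgoing_alpha; case: out; rewrite ?opprK. Qed.

Lemma crossing_sign_vertex x :
  crossing_sign x + crossing_sign (sigma x) + crossing_sign (sigma (sigma x))
  + crossing_sign (sigma (sigma (sigma x))) = 0.
Proof.
rewrite /crossing_sign !outgoing_sigma2.
by case: (out x); case: (out (sigma x)) => /=; lra.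
Qed.

Section RegionLabels.
Variable h : D -> rat.
Hypotheses (h_facep : forall x, h (facep sigma alpha x) = h x)
  (h_alpha : forall x, h (alpha x) = h x + crossing_sign x).

Lemma h_sigma x : h (sigma x) = h x + crossing_sign x.
Proof. by rewrite -{1}[x]alphaK h_facep h_alpha. Qed.

Local Notation BS := (B_sigma sigma alpha d0).
Local Notation BA := (B_alpha alpha).

(* [inl a]: an old region, with Alexander number [a]; [inr x]: a bigon, named by
   a dart of its crossing. *)
Definition region_label (p : D * 'I_3) : rat + D :=
  let: (x, k) := p in
  match val k with
  | 0 => inl (h x)
  | 1 => if out x == out (sigma x) then inr x else inl (h (sigma x))
  | _ => if out x == out (sigma x) then inl (h x) else inr (sigma (sigma (sigma x)))
  end.
Arguments region_label : simpl never.

Lemma B_sigma0 x : BS (x, ord0) =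
  if out x == out (sigma x) then (sigma x, ord0) else (x, inord 1).
Proof. by rewrite /B_sigma. Qed.

Lemma B_sigma1 x : BS (x, inord 1) =
  if out x == out (sigma x) then (x, ord0) else (sigma (sigma (sigma x)), inord 1).
Proof. by rewrite /B_sigma inord1. Qed.

Lemma B_sigma2 x : BS (x, inord 2) = (sigma x, inord 2).
Proof. by rewrite /B_sigma inord2. Qed.

Lemma B_alpha0 x : BA (x, ord0) = (alpha x, ord0). Proof. by []. Qed.
Lemma B_alpha1 x : BA (x, inord 1) = (x, inord 2). Proof. by rewrite /B_alpha inord1. Qed.
Lemma B_alpha2 x : BA (x, inord 2) = (x, inord 1). Proof. by rewrite /B_alpha inord2. Qed.

Lemma region_label0 x : region_label (x, ord0) = inl (h x). Proof. by []. Qed.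

Lemma region_label1 x : region_label (x, inord 1) =
  if out x == out (sigma x) then inr x else inl (h (sigma x)).
Proof. by rewrite /region_label inord1. Qed.

Lemma region_label2 x : region_label (x, inord 2) =
  if out x == out (sigma x) then inl (h x) else inr (sigma (sigma (sigma x))).
Proof. by rewrite /region_label inord2. Qed.

Lemma region_label_facep p : region_label (facep BS BA p) = region_label p.
Proof.
rewrite /facep; case: p => x k; case: (ord3P k) => ->.
- rewrite B_alpha0 B_sigma0 region_label0.
  by case: ifP => out_eq; rewrite ?region_label0 ?region_label1 ?out_eq /= h_facep.
- rewrite B_alpha1 B_sigma2 region_label2 region_label1 outgoing_sigma2 sigma4.
  by case: (out x); case: (out (sigma x)).
- rewrite B_alpha2 B_sigma1 region_label2; case: ifP => //.
  by rewrite region_label1 outgoing_sigma2 sigma4; case: (out x); case: (out (sigma x)).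
Qed.

Lemma uniq_corner_labels d :
  uniq [seq region_label (corner_rep BS d i) | i <- iota 0 4].
Proof.
case: d => x k; rewrite /corner_rep /=.
have h1 := h_sigma x; have h2 := h_sigma (sigma x).
have h3 := h_sigma (sigma (sigma x)); have h4 := h_sigma (sigma (sigma (sigma x))).
rewrite sigma4 /crossing_sign !outgoing_sigma2 in h1 h2 h3 h4.
case out0 : (out x) h1 h2 h3 h4; case out1 : (out (sigma x)) => /= h1 h2 h3 h4;
case: (ord3P k) => ->;
do 4 rewrite ?B_sigma0 ?B_sigma1 ?B_sigma2 ?outgoing_sigma2 ?out0 ?out1 ?sigma4 /=;
rewrite ?region_label0 ?region_label1 ?region_label2 ?outgoing_sigma2 ?out0 ?out1.
all: rewrite !inE /= ?(inj_eq inl_inj) ?(inj_eq inr_inj) ?(inj_eq sigma_inj) ?negb_or /=.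
all: repeat (apply/andP; split) => //.
all: by [rewrite eq_sym sigma2_neq | apply/eqP => ?; lra].
Qed.

Lemma B_reduced : reduced BS BA.
Proof.
move=> d; apply/existsP => -[i /existsP[j /andP[i_neq_j]]].
have label_inv : invariant (facep BS BA) region_label =1 xpredT.
  by move=> p; rewrite /= region_label_facep eqxx.
move/(fconnect_invariant label_inv) => label_ij.
have := uniq_corner_labels d; set s := [seq _ | _ <- _] => uniq_s.
have := nth_uniq (inl 0) (ltn_ord i : (i < size s)%N) (ltn_ord j : (j < size s)%N) uniq_s.
rewrite !(nth_map 0%N) ?size_iota // !nth_iota // label_ij eqxx => /esym/eqP/val_inj.
by apply/eqP.
Qed.
End RegionLabels.
End Orientation.

Theorem proposition4 (D : finType) (sigma alpha : D -> D) (d0 : D) :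
  is_knot_projection sigma alpha ->
  reduced (B_sigma sigma alpha d0) (B_alpha alpha).
Proof.
move=> [[sigma_inj sigma4 sigma2_neq alpha_inv] [map_connected euler one_component]].
have alphaK : involutive alpha := fun x => (alpha_inv x).1.
have alpha_neq x : alpha x != x := (alpha_inv x).2.
have D_gt0 : (0 < #|D|)%N by apply/card_gt0P; exists d0.
have [h [h_facep h_alpha]] := exists_face_potential sigma_inj sigma4 sigma2_neq
  alphaK alpha_neq map_connected (euler D_gt0)
  (crossing_sign_alpha d0 sigma_inj sigma4 sigma2_neq alphaK alpha_neq one_component)
  (crossing_sign_vertex d0 sigma_inj sigma4 sigma2_neq alphaK alpha_neq one_component).
exact: B_reduced h_facep h_alpha.
Qed.
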